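(* Let $T,B,X$ be the unique formal power series in $t$ with $T=1+tT^3$, $B=tT^2$, $X=B(1+X+X^2)$, and let $T(u)$ be the unique formal power series in $t$ (coefficients polynomial in $u$) with $T(u)=1+tuT(u)^2T$. For $j\ge -2$ set $$H_j(u)=(1-X^{j+1})\,X\,T(u)-(1+X)(1-X^{j+2}).$$ Then for every integer $j\ge -1$, $$T_j(u)=T(u)\,\frac{H_j(u)}{H_{j-1}(u)}\cdot\frac{1-X^{j+2}}{1-X^{j+3}}.$$
   Context: A ternary tree is either empty or consists of a root together with three ternary trees (left, middle and right subtrees). Given an integer $j$, embed a ternary tree by giving the root abscissa $j$ and, for a node of abscissa $i$, giving its left child abscissa $i+1$, its middle child abscissa $i$ and its right child abscissa $i-1$. A $j$-positive tree is a ternary tree all of whose nodes have abscissa $\ge 0$ in this embedding (for $j=-1$ only the empty tree). The core of a nonempty ternary tree is the largest subtree containing the root in which every node is reached from the root using only left and middle edges (the core of the empty tree is empty). $T_j(u)=\sum_{\tau} t^{|\tau|}u^{c(\tau)}$, summed over all $j$-positive trees $\tau$, where $|\tau|$ is the number of nodes and $c(\tau)$ the number of core nodes. *)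

From HB Require Import structures.
From mathcomp Require Import all_boot all_order all_algebra.
Set Implicit Arguments. Unset Strict Implicit. Unset Printing Implicit Defensive.
Import Order.TTheory GRing.Theory Num.Theory.
Local Open Scope ring_scope.

(** Formal power series in t whose coefficients are polynomials in u
    (with integer coefficients): a series is its coefficient sequence. *)
Definition ps := nat -> {poly int}.

Definition ps_const (c : {poly int}) : ps := fun n => if n == 0%N then c else 0.
Definition ps_one : ps := ps_const 1.
Definition ps_t : ps := fun n => if n == 1%N then 1 else 0.
Definition ps_u : ps := ps_const 'X.
Definition ps_add (f g : ps) : ps := fun n => f n + g n.
Definition ps_opp (f : ps) : ps := fun n => - f n.
Definition ps_sub (f g : ps) : ps := ps_add f (ps_opp g).
Definition ps_mul (f g : ps) : ps :=
  fun n => \sum_(i < n.+1) f i * g (n - i)%N.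
Definition ps_exp (f : ps) (k : nat) : ps := iter k (ps_mul f) ps_one.

Fixpoint ps_inv_coefs (f : ps) (n : nat) : seq {poly int} :=
  match n with
  | 0 => [:: (f 0%N)^-1]
  | n'.+1 =>
      let s := ps_inv_coefs f n' in
      rcons s (- (f 0%N)^-1 * \sum_(i < n'.+1) f i.+1 * nth 0 s (n' - i)%N)
  end.
Definition ps_inv (f : ps) : ps := fun n => nth 0 (ps_inv_coefs f n) n.
Definition ps_div (f g : ps) : ps := ps_mul f (ps_inv g).

Declare Scope ps_scope.
Delimit Scope ps_scope with PS.
Notation "f + g" := (ps_add f g) : ps_scope.
Notation "f - g" := (ps_sub f g) : ps_scope.
Notation "f * g" := (ps_mul f g) : ps_scope.
Notation "f / g" := (ps_div f g) : ps_scope.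
Notation "f ^ k" := (ps_exp f k) : ps_scope.

(** Ternary trees (Leaf = empty tree). *)
Inductive ttree := Leaf | Node of ttree & ttree & ttree.

Fixpoint tsize (t : ttree) : nat :=
  match t with Leaf => 0%N | Node l m r => (tsize l + tsize m + tsize r).+1 end.

(** All nodes have abscissa >= 0, when the root has abscissa i;
    left child i+1, middle child i, right child i-1. *)
Fixpoint absc_pos (i : int) (t : ttree) : bool :=
  match t with
  | Leaf => true
  | Node l m r => [&& 0 <= i, absc_pos (i + 1) l, absc_pos i m & absc_pos (i - 1) r]
  end.
Definition jpositive (j : int) (t : ttree) : bool := absc_pos j t.

(** Number of core nodes: nodes reached from the root by left/middle edges only. *)
Fixpoint core_size (t : ttree) : nat :=
  match t with Leaf => 0%N | Node l m _ => (core_size l + core_size m).+1 end.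

(** All ternary trees of depth <= n, each listed exactly once.
    Every tree with n nodes has depth <= n. *)
Fixpoint trees_depth (n : nat) : seq ttree :=
  match n with
  | 0 => [:: Leaf]
  | n'.+1 => Leaf :: let s := trees_depth n' in
                flatten [seq [seq Node l m r | m <- s, r <- s] | l <- s]
  end.

Definition Tj (j : int) : ps :=
  fun n => \sum_(tau <- trees_depth n | (tsize tau == n) && jpositive j tau)
             'X^(core_size tau).

(** H_j(u) = (1 - X^(j+1)) X T(u) - (1+X)(1 - X^(j+2)), written (for j >= -2)
    as (X - X^(j+2)) T(u) - (1+X)(1 - X^(j+2)) so that only nonnegative powers occur. *)
Definition Hser (X Tu : ps) (j : int) : ps :=
  ((X - X ^ (absz (j + 2)%R)) * Tu - (ps_one + X) * (ps_one - X ^ (absz (j + 2)%R)))%PS.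

From Pilot Require Import Defs.
From HB Require Import structures.
From mathcomp Require Import all_boot all_order all_algebra.
From mathcomp Require Import zify.
From Stdlib Require Import FunctionalExtensionality Ring.
Import Order.TTheory GRing.Theory Num.Theory.
Import Defs.
Set Implicit Arguments. Unset Strict Implicit. Unset Printing Implicit Defensive.

(* Decomposing a j-positive tree at its root shows that the series S_j of j-positive
   trees (the case u = 1) and the series T_j(u) satisfy
     S_j = 1 + t S_(j+1) S_j S_(j-1),   T_j(u) = 1 + t u T_(j+1)(u) T_j(u) S_(j-1),
   with S_(-1) = T_(-1)(u) = 1, and that this system determines every coefficient of
   every series from lower ones.  It thus suffices to check that the closed forms,
   together with S_j = T (1-X^(j+2))(1-X^(j+5)) / ((1-X^(j+3))(1-X^(j+4))), satisfy it.
   In the products on the right the ratios telescope, and what is left are polynomial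
   identities in X, T and T(u); the one for S_j uses T = (1+X+X^2)/(1+X^2). *)

Local Open Scope ring_scope.

(** * Power series in t over Z[u] *)

Lemma ps_ext (f g : ps) : f =1 g -> f = g.
Proof. exact: functional_extensionality. Qed.

Lemma ps_mul_rev (f g : ps) n :
  ps_mul f g n = \sum_(i < n.+1) f (n - i)%N * g i.
Proof.
rewrite /ps_mul (reindex_inj rev_ord_inj) /=.
by apply: eq_bigr => i _; rewrite subSS subKn // -ltnS.
Qed.

Lemma ps_mulC (f g : ps) : ps_mul f g = ps_mul g f.
Proof.
apply: ps_ext => n; rewrite ps_mul_rev.
by apply: eq_bigr => i _; rewrite mulrC.
Qed.

Lemma ps_mulA (f g h : ps) : ps_mul f (ps_mul g h) = ps_mul (ps_mul f g) h.
Proof.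
apply: ps_ext => n; rewrite [RHS]ps_mul_rev.
pose a i k := f i * (g (n - i - k)%N * h k).
transitivity (\sum_(i < n.+1) \sum_(k < n.+1 | (k <= n - i)%N) a i k).
  apply: eq_bigr => i _; rewrite ps_mul_rev big_distrr /=.
  by rewrite (big_ord_narrow_leq (leq_subr _ _)).
rewrite (exchange_big_dep predT) //=; apply: eq_bigr => k _.
transitivity (\sum_(i < n.+1 | (i <= n - k)%N) a i k).
  by apply: eq_bigl => i; have := ltn_ord i; have := ltn_ord k; lia.
rewrite (big_ord_narrow_leq (leq_subr _ _)) big_distrl /=.
by apply: eq_bigr => i _; rewrite /a -!subnDA addnC mulrA.
Qed.

Lemma ps_mul1 (f : ps) : ps_mul ps_one f = f.
Proof.
apply: ps_ext => n; rewrite /ps_mul big_ord_recl subn0 /ps_one /ps_const /=.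
by rewrite mul1r big1 ?addr0 // => i _; rewrite mul0r.
Qed.

Lemma ps_mulDl (f g h : ps) : ps_mul (ps_add f g) h = ps_add (ps_mul f h) (ps_mul g h).
Proof.
apply: ps_ext => n; rewrite /ps_mul /ps_add -big_split /=.
by apply: eq_bigr => i _; rewrite mulrDl.
Qed.

Definition ps_zero : ps := ps_const 0.

Lemma ps_ring_theory :
  ring_theory ps_zero ps_one ps_add ps_mul ps_sub ps_opp (@eq ps).
Proof.
split.
- by move=> f; apply: ps_ext => n; rewrite /ps_add /ps_zero /ps_const if_same add0r.
- by move=> f g; apply: ps_ext => n; rewrite /ps_add addrC.
- by move=> f g h; apply: ps_ext => n; rewrite /ps_add addrA.
- exact: ps_mul1.
- exact: ps_mulC.
- exact: ps_mulA.
- exact: ps_mulDl.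
- by [].
- by move=> f; apply: ps_ext => n; rewrite /ps_add /ps_opp /ps_zero /ps_const if_same addrN.
Qed.

Add Ring ps_ring : ps_ring_theory.

Lemma ps_mul_coef0 (f g : ps) : ps_mul f g 0 = f 0%N * g 0%N.
Proof. by rewrite /ps_mul big_ord1. Qed.

Lemma ps_mul_constl c (f : ps) n : ps_mul (ps_const c) f n = c * f n.
Proof.
rewrite /ps_mul big_ord_recl subn0 /ps_const /=.
by rewrite big1 ?addr0 // => i _; rewrite mul0r.
Qed.

Lemma ps_mul_t0 (f : ps) : ps_mul ps_t f 0 = 0.
Proof. by rewrite ps_mul_coef0 mul0r. Qed.

Lemma ps_mul_tS (f : ps) n : ps_mul ps_t f n.+1 = f n.
Proof.
rewrite /ps_mul !big_ord_recl /ps_t /= mul0r add0r mul1r subSS subn0.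
by rewrite big1 ?addr0 // => i _; rewrite mul0r.
Qed.

Lemma eq_ps_mul_coef (f g f' g' : ps) n :
  (forall m, (m <= n)%N -> f m = f' m) -> (forall m, (m <= n)%N -> g m = g' m) ->
  ps_mul f g n = ps_mul f' g' n.
Proof.
move=> ff' gg'; apply: eq_bigr => i _.
by rewrite ff' ?gg' ?leq_subr // -ltnS.
Qed.

Definition ps_unit (f : ps) := f 0%N \is a GRing.unit.

Lemma size_ps_inv_coefs (f : ps) n : size (ps_inv_coefs f n) = n.+1.
Proof. by elim: n => [|n IHn] //=; rewrite size_rcons IHn. Qed.

Lemma nth_ps_inv_coefs (f : ps) n k :
  (k <= n)%N -> nth 0 (ps_inv_coefs f n) k = ps_inv f k.
Proof.
elim: n => [|n IHn]; first by rewrite leqn0 => /eqP ->.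
rewrite leq_eqVlt => /orP [/eqP -> //|]; rewrite ltnS => le_kn /=.
by rewrite nth_rcons size_ps_inv_coefs ltnS le_kn IHn.
Qed.

Lemma ps_invS (f : ps) n :
  ps_inv f n.+1 = - (f 0%N)^-1 * \sum_(i < n.+1) f i.+1 * ps_inv f (n - i)%N.
Proof.
rewrite /ps_inv /= nth_rcons size_ps_inv_coefs ltnn eqxx.
by congr (_ * _); apply: eq_bigr => i _; rewrite nth_ps_inv_coefs ?leq_subr.
Qed.

Lemma ps_mulV (f : ps) : ps_unit f -> ps_mul f (ps_inv f) = ps_one.
Proof.
move=> f0_unit; apply: ps_ext => -[|n]; first by rewrite ps_mul_coef0 /= mulrV.
rewrite /ps_mul big_ord_recl subn0 ps_invS mulrA mulrN mulrV // mulN1r.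
by rewrite /ps_one /ps_const /= addNr.
Qed.

Lemma ps_unit_1subr (f : ps) : f 0%N = 0 -> ps_unit (ps_one - f)%PS.
Proof. by move=> f0; rewrite /ps_unit /ps_sub /ps_add /ps_opp f0 subr0 unitr1. Qed.

Lemma ps_divff (b : ps) : ps_unit b -> (b / b = ps_one)%PS.
Proof. exact: ps_mulV. Qed.

Lemma ps_mul_div_trans (a b c : ps) : ps_unit b -> (a / b * (b / c) = a / c)%PS.
Proof.
move=> b_unit; rewrite /ps_div.
transitivity (ps_mul (ps_mul a (ps_mul b (ps_inv b))) (ps_inv c)); first ring.
by rewrite ps_mulV //; ring.
Qed.

(** * The closed forms as telescoping ratios *)

Section RatioForm.
Local Open Scope ps_scope.

Variable X : ps.
Hypothesis X0 : X 0%N = 0%R.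

Lemma ps_unit_1subX (q : ps) : ps_unit (ps_one - X * q).
Proof. by apply: ps_unit_1subr; rewrite ps_mul_coef0 X0 mul0r. Qed.

(* [ratio_form A f (X^(j+1))] is the claimed T_j(u) for [A = T(u)], [f = Hfun], and
   the closed form of S_j above for [A = T], [f = Sfun]. *)
Definition ratio_form (A : ps) (f : ps -> ps) (p : ps) : ps :=
  A * (f (X * p) / f p) * ((ps_one - X * p) / (ps_one - X * (X * p))).

Definition Sfun (q : ps) : ps := ps_one - X * (X * (X * q)).

(* What remains of [ratio_form_rec] once the ratios telescope and the denominators
   are cleared. *)
Definition ratio_identity (A : ps) (f : ps -> ps) (q : ps) : Prop :=
  A * f (X * q) * (ps_one - X * q) =
  f q * (ps_one - X * (X * q)) + (A - ps_one) * f (X * (X * q)) * (ps_one - q).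

Variables (A : ps) (f : ps -> ps).
Hypothesis f_unit : forall q, ps_unit (f q).

Lemma ratio_form1 : ratio_identity A f ps_one -> ratio_form A f ps_one = ps_one.
Proof.
rewrite /ratio_form /ratio_identity /ps_div => base.
set g := ps_one - X * (X * ps_one) in base *.
transitivity ((A * f (X * ps_one) * (ps_one - X * ps_one)) * (ps_inv (f ps_one) * ps_inv g)).
  by ring.
rewrite base; transitivity ((f ps_one * ps_inv (f ps_one)) * (g * ps_inv g)); first ring.
by rewrite !ps_mulV ?ps_unit_1subX //; ring.
Qed.

Lemma ratio_form_rec (c T p : ps) :
  ps_t * c * (A * A) * T = A - ps_one -> ratio_identity A f (X * p) ->
  ratio_form A f (X * p) =
  ps_one + ps_t * (c * (ratio_form A f (X * (X * p)) * ratio_form A f (X * p) *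
                        ratio_form T Sfun p)).
Proof.
move=> eqA; rewrite /ratio_form /ratio_identity /Sfun.
set p1 := X * p; set p2 := X * p1; set p3 := X * p2.
set f1 := f p1; set f2 := f p2; set f3 := f p3.
set g0 := ps_one - p1; set g1 := ps_one - X * p1; set g2 := ps_one - X * p2.
set g3 := ps_one - X * p3 => step.
have [f1_unit f2_unit] : ps_unit f1 /\ ps_unit f2 by split; apply: f_unit.
have [g1_unit g2_unit g3_unit] : [/\ ps_unit g1, ps_unit g2 & ps_unit g3].
  by split; apply: ps_unit_1subX.
have -> : ps_t * (c * (A * (f3 / f2) * (g2 / g3) * (A * (f2 / f1) * (g1 / g2)) *
                       (T * (g3 / g2) * (g0 / g1)))) =
          (ps_t * c * (A * A) * T) * ((f3 / f2) * (f2 / f1)) *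
          ((g2 / g3) * (g3 / g2)) * ((g0 / g1) * (g1 / g2)) by ring.
rewrite eqA !ps_mul_div_trans // ps_divff // /ps_div.
transitivity ((A * f2 * g1) * (ps_inv f1 * ps_inv g2)); first ring.
rewrite step.
transitivity ((f1 * ps_inv f1) * (g2 * ps_inv g2) +
              (A - ps_one) * f3 * g0 * (ps_inv f1 * ps_inv g2)); first ring.
by rewrite !ps_mulV //; ring.
Qed.

End RatioForm.

(** * Generating functions of j-positive trees *)

Fixpoint ttree_eqb (a b : ttree) : bool :=
  match a, b with
  | Leaf, Leaf => true
  | Node l m r, Node l' m' r' => [&& ttree_eqb l l', ttree_eqb m m' & ttree_eqb r r']
  | _, _ => false
  end.

Lemma ttree_eqP : Equality.axiom ttree_eqb.
Proof.
elim=> [|l IHl m IHm r IHr] [|l' m' r'] /=; try by constructor.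
apply: (iffP idP) => [/and3P [/IHl -> /IHm -> /IHr ->] //|[<- <- <-]].
by apply/and3P; split; [exact/IHl|exact/IHm|exact/IHr].
Qed.

HB.instance Definition _ := hasDecEq.Build ttree ttree_eqP.

Fixpoint tdepth (t : ttree) : nat :=
  match t with
  | Leaf => 0
  | Node l m r => (maxn (tdepth l) (maxn (tdepth m) (tdepth r))).+1
  end.

Lemma tdepth_le_size t : (tdepth t <= tsize t)%N.
Proof. by elim: t => [|l IHl m IHm r IHr] //=; rewrite ltnS !geq_max; lia. Qed.

Lemma mem_trees_depth d t : (t \in trees_depth d) = (tdepth t <= d)%N.
Proof.
elim: d t => [|d IHd] [|l m r] //=.
rewrite in_cons /= ltnS !geq_max -!IHd.
apply/flatten_mapP/and3P => [[l' l'_in /allpairsP [[m' r'] /= [? ? [-> -> ->]]]]//|].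
by case=> l_in m_in r_in; exists l => //; apply: allpairs_f.
Qed.

Lemma uniq_flatten_map (S T : eqType) (g : S -> seq T) (s : seq S) :
  uniq s -> (forall x, x \in s -> uniq (g x)) ->
  (forall x y z, z \in g x -> z \in g y -> x = y) -> uniq (flatten (map g s)).
Proof.
elim: s => [|x s IHs] //= /andP [x_notin_s s_uniq] g_uniq g_disj.
rewrite cat_uniq g_uniq ?mem_head //= IHs // => [|y y_in]; last first.
  by apply: g_uniq; rewrite in_cons y_in orbT.
rewrite andbT; apply/hasPn => z /flatten_mapP [y y_in z_in]; apply/negP => z_in'.
by move: x_notin_s; rewrite (g_disj _ _ _ z_in' z_in) y_in.
Qed.

Lemma uniq_trees_depth d : uniq (trees_depth d).
Proof.
elim: d => [|d IHd] //=; apply/andP; split.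
  by apply/negP => /flatten_mapP [l _ /allpairsP [p [_ _]]].
apply: uniq_flatten_map => // [l _|l l' t /allpairsP [p [_ _ ->]] /allpairsP [q [_ _ []]]//].
by apply: allpairs_uniq => // -[m r] [m' r'] _ _ [-> ->].
Qed.

Lemma big_trees_depth_size (P : pred ttree) (F : ttree -> {poly int}) n d :
  (n <= d)%N ->
  \sum_(t <- trees_depth d | (tsize t == n) && P t) F t =
  \sum_(t <- trees_depth n | (tsize t == n) && P t) F t.
Proof.
move=> le_nd; rewrite -!(big_filter _ (fun t => (tsize t == n) && P t)).
apply/perm_big/uniq_perm; rewrite ?filter_uniq ?uniq_trees_depth // => t.
rewrite !mem_filter !mem_trees_depth.
case: (tsize t =P n) => //= size_t; case: (P t) => //=.
have le_depth_n : (tdepth t <= n)%N by rewrite -size_t tdepth_le_size.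
by rewrite le_depth_n (leq_trans le_depth_n le_nd).
Qed.

Definition size_series (I : Type) (s : seq I) (sz : I -> nat) (F : I -> {poly int}) : ps :=
  fun n => \sum_(x <- s | sz x == n) F x.

Lemma ps_mul_size_series (I J : Type) (s1 : seq I) (s2 : seq J) (sz1 : I -> nat)
    (sz2 : J -> nat) (F1 : I -> {poly int}) (F2 : J -> {poly int}) n :
  \sum_(x <- s1) \sum_(y <- s2 | (sz1 x + sz2 y == n)%N) F1 x * F2 y =
  ps_mul (size_series s1 sz1 F1) (size_series s2 sz2 F2) n.
Proof.
symmetry; rewrite /ps_mul /size_series.
under eq_bigr do rewrite big_distrl /= big_mkcond /=.
rewrite exchange_big /=; apply: eq_bigr => x _.
under eq_bigr do rewrite eq_sym.
rewrite -big_mkcond /=.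
rewrite (big_ord1_eq _ (fun i => F1 x * \sum_(y <- s2 | sz2 y == (n - i)%N) F2 y)).
case: ltnP => [lt_x_n1|le_n1_x].
  by rewrite big_distrr /=; apply: eq_bigl => y; apply/eqP/eqP; lia.
by rewrite big_pred0 // => y; apply/eqP; lia.
Qed.

Definition gf_jpos (w : ttree -> {poly int}) (j : int) : ps :=
  fun n => \sum_(tau <- trees_depth n | (tsize tau == n) && jpositive j tau) w tau.

Definition jpos_weight (j : int) (w : ttree -> {poly int}) (t : ttree) : {poly int} :=
  if jpositive j t then w t else 0.

Lemma size_series_trees_depth w j n a : (a <= n)%N ->
  size_series (trees_depth n) tsize (jpos_weight j w) a = gf_jpos w j a.
Proof. by move=> le_an; rewrite /size_series -big_mkcondr big_trees_depth_size. Qed.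

Lemma gf_jpos_neg1 w : w Leaf = 1 -> gf_jpos w (-1) = ps_one.
Proof.
move=> w_leaf; apply: ps_ext => -[|n].
  by rewrite /gf_jpos /= big_cons big_nil /= addr0.
by rewrite /gf_jpos big_pred0 // => -[|l m r] //=; rewrite andbF.
Qed.

Section Recursion.

Variables (w w1 w2 w3 : ttree -> {poly int}) (c : {poly int}) (j : int).
Hypothesis j_ge0 : 0 <= j.
Hypothesis w_node : forall l m r, w (Node l m r) = c * (w1 l * w2 m * w3 r).

Lemma gf_jpos_coefS n (s := trees_depth n) :
  gf_jpos w j n.+1 =
  c * \sum_(l <- s) \sum_(m <- s) \sum_(r <- s | (tsize l + tsize m + tsize r == n)%N)
        jpos_weight (j + 1) w1 l * jpos_weight j w2 m * jpos_weight (j - 1) w3 r.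
Proof.
rewrite /gf_jpos big_mkcond /= big_cons /= add0r big_flatten big_map big_distrr.
apply: eq_bigr => l _; rewrite big_allpairs_dep big_distrr.
apply: eq_bigr => m _; rewrite [in RHS]big_mkcond big_distrr.
apply: eq_bigr => r _ /=; rewrite eqSS /jpositive /= j_ge0 /jpos_weight /jpositive w_node.
by case: (_ == n); case: absc_pos; case: absc_pos; case: absc_pos; rewrite /= ?(mulr0, mul0r).
Qed.

Lemma gf_jpos_rec : w Leaf = 1 ->
  gf_jpos w j = (ps_one + ps_t * (ps_const c * (gf_jpos w1 (j + 1) * gf_jpos w2 j *
                                             gf_jpos w3 (j - 1))))%PS.
Proof.
move=> w_leaf; apply: ps_ext => -[|n].
  by rewrite /ps_add ps_mul_t0 addr0 /gf_jpos /= big_cons big_nil /= addr0.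
rewrite /ps_add ps_mul_tS ps_mul_constl add0r gf_jpos_coefS; congr (c * _).
set s := trees_depth n.
set F1 := jpos_weight (j + 1) w1; set F2 := jpos_weight j w2; set F3 := jpos_weight (j - 1) w3.
transitivity (\sum_(p <- [seq (l, m) | l <- s, m <- s])
  \sum_(r <- s | (tsize p.1 + tsize p.2 + tsize r == n)%N) (F1 p.1 * F2 p.2) * F3 r).
  by rewrite big_allpairs.
rewrite (ps_mul_size_series _ _ (fun p => tsize p.1 + tsize p.2)%N _ (fun p => F1 p.1 * F2 p.2)).
apply: eq_ps_mul_coef => a le_an; last by rewrite size_series_trees_depth.
rewrite /size_series big_mkcond big_allpairs /=.
transitivity (\sum_(l <- s) \sum_(m <- s | (tsize l + tsize m == a)%N) F1 l * F2 m).
  by apply: eq_bigr => l _; rewrite [RHS]big_mkcond.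
rewrite ps_mul_size_series.
by apply: eq_ps_mul_coef => b le_ba; rewrite size_series_trees_depth ?(leq_trans le_ba).
Qed.

End Recursion.

Lemma gf_jpos_recS (w w1 w2 w3 : ttree -> {poly int}) (c : {poly int}) (k : nat) :
  w Leaf = 1 -> (forall l m r, w (Node l m r) = c * (w1 l * w2 m * w3 r)) ->
  gf_jpos w (k.+1%:Z - 1) =
  (ps_one + ps_t * (ps_const c * (gf_jpos w1 (k.+2%:Z - 1) * gf_jpos w2 (k.+1%:Z - 1) *
                                  gf_jpos w3 (k%:Z - 1))))%PS.
Proof.
move=> w_leaf w_node.
have -> : k.+2%:Z - 1 = (k.+1%:Z - 1) + 1 by lia.
have -> : k%:Z - 1 = (k.+1%:Z - 1) - 1 by lia.
by apply: gf_jpos_rec => //; lia.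
Qed.

Lemma Tj_gf_jpos j : Tj j = gf_jpos (fun t => 'X^(core_size t)) j.
Proof. by []. Qed.

Definition Sj (j : int) : ps := gf_jpos (fun _ => 1) j.

Section SystemUniqueness.
Local Open Scope ps_scope.

(* The coefficient of t^(n+1) on the right only involves coefficients of order <= n. *)
Lemma ps_system_unique (c : ps) (Q Q' R R' : nat -> ps) :
  Q 0%N = ps_one -> Q' 0%N = ps_one ->
  (forall k, Q k.+1 = ps_one + ps_t * (c * (Q k.+2 * Q k.+1 * R k))) ->
  (forall k, Q' k.+1 = ps_one + ps_t * (c * (Q' k.+2 * Q' k.+1 * R' k))) ->
  (forall n, (forall k m, (m <= n)%N -> Q k m = Q' k m) ->
             forall k m, (m <= n)%N -> R k m = R' k m) ->
  forall k, Q k = Q' k.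
Proof.
move=> Q0 Q'0 Q_rec Q'_rec R_causal.
suff agree n k m : (m <= n)%N -> Q k m = Q' k m.
  by move=> k; apply: ps_ext => m; apply: (agree m).
elim: n k m => [|n IHn] [|k] i; rewrite ?Q0 ?Q'0 // ?leqn0.
  by move=> /eqP ->; rewrite Q_rec Q'_rec /ps_add !ps_mul_t0.
rewrite leq_eqVlt ltnS => /orP [/eqP ->|]; last exact: IHn.
rewrite (Q_rec k) (Q'_rec k) /ps_add !ps_mul_tS; apply: congr1.
have R_agree := R_causal n IHn.
apply: eq_ps_mul_coef => // m le_mn.
apply: eq_ps_mul_coef => [m' le_m'm|m' le_m'm]; last by apply: R_agree; lia.
by apply: eq_ps_mul_coef => l le_lm'; apply: IHn; lia.
Qed.

End SystemUniqueness.

Lemma ps_exp2 (f : ps) : (f ^ 2 = f * f)%PS.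
Proof. by change (f * (f * ps_one) = f * f)%PS; ring. Qed.

Lemma ps_exp3 (f : ps) : (f ^ 3 = f * (f * f))%PS.
Proof. by change (f * (f * (f * ps_one)) = f * (f * f))%PS; ring. Qed.

Section ClosedForms.
Local Open Scope ps_scope.

(* [Hser X Tu j] is [Hfun X Tu (X ^ (j + 2))]. *)
Definition Hfun (X Tu q : ps) : ps := (X - q) * Tu - (ps_one + X) * (ps_one - q).

Variables X T Tu : ps.
Hypothesis X0 : X 0%N = 0%R.
Hypothesis Tu0 : Tu 0%N = 1%R.
Hypothesis T_eq : T = ps_one + ps_t * (T * (T * T)).
Hypothesis TX_eq : T * (ps_one + X * X) = ps_one + X + X * X.
Hypothesis Tu_eq : Tu = ps_one + ps_t * ps_u * (Tu * Tu) * T.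

Lemma ps_unit_Hfun q : ps_unit (Hfun X Tu q).
Proof.
rewrite /ps_unit /Hfun /ps_sub /ps_add /ps_opp !ps_mul_coef0 X0 Tu0.
by rewrite /ps_one /ps_const /= sub0r mulr1 addr0 mul1r opprB addKr unitrN1.
Qed.

Lemma ps_unit_Sfun q : ps_unit (Sfun X q).
Proof. exact: ps_unit_1subX. Qed.

Lemma Hfun_ratio_identity q : ratio_identity X Tu (Hfun X Tu) q.
Proof. by rewrite /ratio_identity /Hfun; ring. Qed.

Lemma Sfun_ratio_identity q : ratio_identity X T (Sfun X) q.
Proof.
rewrite /ratio_identity /Sfun.
transitivity ((ps_one - X * (X * (X * q))) * (ps_one - X * (X * q)) +
              (T - ps_one) * (ps_one - X * (X * (X * (X * (X * q))))) * (ps_one - q) +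
              q * (ps_one - X) * (ps_one - X * X) *
              (T * (ps_one + X * X) - (ps_one + X + X * X))); first ring.
by rewrite TX_eq; ring.
Qed.

Lemma Sj_closed_form k : Sj (k%:Z - 1)%R = ratio_form X T (Sfun X) (X ^ k).
Proof.
have T_rec : ps_t * ps_one * (T * T) * T = T - ps_one.
  by transitivity ((ps_one + ps_t * (T * (T * T))) - ps_one); [ring | rewrite -T_eq].
pose S k := Sj (k%:Z - 1)%R; pose S' k := ratio_form X T (Sfun X) (X ^ k).
apply: (@ps_system_unique ps_one S S' S S') => //.
- exact: gf_jpos_neg1.
- by apply: ratio_form1 => //; [exact: ps_unit_Sfun | exact: Sfun_ratio_identity].
- by move=> {}k; apply: gf_jpos_recS => // *; rewrite !mul1r.
- by move=> {}k; apply: ratio_form_rec => //; [exact: ps_unit_Sfun | exact: Sfun_ratio_identity].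
Qed.

Lemma Tj_closed_form k : Tj (k%:Z - 1)%R = ratio_form X Tu (Hfun X Tu) (X ^ k).
Proof.
have Tu_rec : ps_t * ps_u * (Tu * Tu) * T = Tu - ps_one.
  by transitivity ((ps_one + ps_t * ps_u * (Tu * Tu) * T) - ps_one); [ring | rewrite -Tu_eq].
rewrite Tj_gf_jpos.
pose A k := gf_jpos (fun t => 'X^(core_size t)) (k%:Z - 1)%R.
pose A' k := ratio_form X Tu (Hfun X Tu) (X ^ k).
pose S k := Sj (k%:Z - 1)%R.
apply: (@ps_system_unique ps_u A A' S S) => //.
- exact: gf_jpos_neg1.
- by apply: ratio_form1 => //; [exact: ps_unit_Hfun | exact: Hfun_ratio_identity].
- move=> {}k; apply: gf_jpos_recS => // l m r /=.
  by rewrite exprS exprD mulr1.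
- move=> {}k; rewrite /S Sj_closed_form.
  by apply: ratio_form_rec => //; [exact: ps_unit_Hfun | exact: Hfun_ratio_identity].
Qed.

End ClosedForms.

Local Close Scope ring_scope.

Theorem theorem10 (T B X Tu : ps) :
  T =1 (ps_one + ps_t * T ^ 3)%PS ->
  B =1 (ps_t * T ^ 2)%PS ->
  X =1 (B * (ps_one + X + X ^ 2))%PS ->
  Tu =1 (ps_one + ps_t * ps_u * Tu ^ 2 * T)%PS ->
  forall j : int, (-1 <= j)%R ->
    Tj j =1 (Tu * (Hser X Tu j / Hser X Tu (j - 1)%R)
             * ((ps_one - X ^ (absz (j + 2)%R)) / (ps_one - X ^ (absz (j + 3)%R))))%PS.
Proof.
move=> /ps_ext T_eq /ps_ext B_eq /ps_ext X_eq /ps_ext Tu_eq j j_ge.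
rewrite ?ps_exp2 ?ps_exp3 in T_eq B_eq X_eq Tu_eq.
have X_0 : X 0%N = 0%R by rewrite X_eq ps_mul_coef0 B_eq ps_mul_t0 mul0r.
have Tu_0 : Tu 0%N = 1%R by rewrite Tu_eq /ps_add !ps_mul_coef0 /ps_t /= !mul0r addr0.
have TX_eq : (T * (ps_one + X * X) = ps_one + X + X * X)%PS.
  have BX : (B * (ps_one + X + X * X) = X)%PS by rewrite [RHS]X_eq; ring.
  have BT : (ps_one + B * T = T)%PS by rewrite B_eq [RHS]T_eq; ring.
  transitivity ((ps_one + B * T) * (ps_one + X + X * X) - T * (B * (ps_one + X + X * X)))%PS.
    by rewrite BX BT; ring.
  by ring.
have [k ->] : exists k : nat, j = (k%:Z - 1)%R by exists (absz (j + 1)%R); lia.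
rewrite /Hser.
have -> : absz (k%:Z - 1 + 2)%R = k.+1 by lia.
have -> : absz (k%:Z - 1 - 1 + 2)%R = k by lia.
have -> : absz (k%:Z - 1 + 3)%R = k.+2 by lia.
by move=> n; rewrite (Tj_closed_form X_0 Tu_0 T_eq TX_eq Tu_eq).
Qed.
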